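(* Let $G$ be any graph and let $vw$ be an edge of $G$ that belongs to two different bicliques of $G$. Then, after possibly interchanging the names of $v$ and $w$, at least one of the following holds: (a) there exist vertices $v_1,w_1$ such that $v v_1$ and $w w_1$ are edges, while $v w_1$, $w v_1$ and $v_1 w_1$ are non-edges; or (b) there exist vertices $v_1,v_2$ such that $v v_1$, $v v_2$ and $v_1v_2$ are edges, while $w v_1$ and $w v_2$ are non-edges.
   Context: All graphs are finite, simple and undirected. A biclique of a graph $G$ is a maximal (with respect to inclusion) induced subgraph of $G$ that is a complete bipartite graph $K_{p,q}$ with $p,q\ge 1$. *)

From mathcomp Require Import all_boot.
Set Implicit Arguments. Unset Strict Implicit. Unset Printing Implicit Defensive.

Definition simple_graph (T : finType) (e : rel T) : Prop :=
  symmetric e /\ irreflexive e.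

Definition induces_complete_bipartite (T : finType) (e : rel T) (B : {set T}) : Prop :=
  exists X Y : {set T},
    [/\ X :|: Y = B, [disjoint X & Y], X != set0, Y != set0 &
     [/\ forall x y, x \in X -> y \in Y -> e x y,
         forall x x', x \in X -> x' \in X -> ~~ e x x' &
         forall y y', y \in Y -> y' \in Y -> ~~ e y y']].

(* A biclique: an (inclusion-)maximal induced complete bipartite subgraph,
   identified with its vertex set. *)
Definition biclique (T : finType) (e : rel T) (B : {set T}) : Prop :=
  induces_complete_bipartite e B /\
  forall B' : {set T}, B \subset B' -> induces_complete_bipartite e B' -> B' = B.

Definition alt_a (T : finType) (e : rel T) (v w : T) : Prop :=
  exists v1 w1 : T,
    [/\ e v v1, e w w1, ~~ e v w1, ~~ e w v1 & ~~ e v1 w1].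

Definition alt_b (T : finType) (e : rel T) (v w : T) : Prop :=
  exists v1 v2 : T,
    [/\ e v v1, e v v2, e v1 v2, ~~ e w v1 & ~~ e w v2].

From mathcomp Require Import all_boot.
From Stdlib Require Import Classical.
Set Implicit Arguments. Unset Strict Implicit.

(* For an edge vw, write N(u \ z) for the set of neighbours of u
   that are not adjacent to z, and let S := N(w \ v) :|: N(v \ w).
   - Every induced complete bipartite subgraph containing v and w has v and w
     on opposite sides; the side of v consists of neighbours of w that are
     not adjacent to v, and symmetrically, so its vertex set lies inside S.
   - If (a) fails for (v, w) and (b) fails for both (v, w) and (w, v), then
     S itself induces a complete bipartite graph with sides N(w \ v) and
     N(v \ w): an edge inside a side is a witness of (b), a non-edge across
     the sides is a witness of (a).
   - In that situation maximality forces every biclique containing v and w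
     to be equal to S, so two different such bicliques cannot exist. *)

Section EdgeNeighbourhood.

Variables (T : finType) (e : rel T).
Hypothesis G : simple_graph e.

Definition excl_nbhd (u z : T) : {set T} := [set x | e u x & ~~ e z x].

Definition edge_span (v w : T) : {set T} := excl_nbhd w v :|: excl_nbhd v w.

Lemma sides_in_edge_span (v w : T) (X Y : {set T}) :
  (forall x y, x \in X -> y \in Y -> e x y) ->
  (forall x x', x \in X -> x' \in X -> ~~ e x x') ->
  (forall y y', y \in Y -> y' \in Y -> ~~ e y y') ->
  v \in X -> w \in Y -> X :|: Y \subset edge_span v w.
Proof.
have [sym_e _] := G.
move=> eXY indX indY vX wY; apply/subsetP => x; rewrite !inE.
case/orP => [xX | xY].
- by rewrite (indX _ _ vX xX) sym_e (eXY _ _ xX wY).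
- by rewrite (eXY _ _ vX xY) (indY _ _ wY xY) orbT.
Qed.

Lemma complete_bipartite_sub_edge_span (v w : T) (B : {set T}) :
  e v w -> induces_complete_bipartite e B -> v \in B -> w \in B ->
  B \subset edge_span v w.
Proof.
move=> evw [X [Y [defB _ _ _ [eXY indX indY]]]]; rewrite -defB.
rewrite !inE => /orP [vX | vY] /orP [wX | wY].
- by move: (indX _ _ vX wX); rewrite evw.
- exact: sides_in_edge_span.
- have -> : edge_span v w = edge_span w v by rewrite /edge_span setUC.
  exact: sides_in_edge_span.
- by move: (indY _ _ vY wY); rewrite evw.
Qed.

Lemma edge_span_complete_bipartite (v w : T) :
  e v w -> ~ alt_a e v w -> ~ alt_b e v w -> ~ alt_b e w v ->
  induces_complete_bipartite e (edge_span v w).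
Proof.
have [sym_e irr_e] := G.
move=> evw not_a not_bvw not_bwv.
exists (excl_nbhd w v), (excl_nbhd v w); split => //.
- by apply/pred0P => x /=; rewrite !inE; case: (e w x); case: (e v x).
- by apply/set0Pn; exists v; rewrite inE sym_e evw irr_e.
- by apply/set0Pn; exists w; rewrite inE evw irr_e.
split.
- move=> x y; rewrite !inE => /andP [ewx nevx] /andP [evy newy].
  apply/negPn/negP => nexy; apply: not_a; exists y, x; split => //.
  by rewrite sym_e.
- move=> x x'; rewrite !inE => /andP [ewx nevx] /andP [ewx' nevx'].
  by apply/negP => exx'; apply: not_bwv; exists x, x'.
- move=> y y'; rewrite !inE => /andP [evy newy] /andP [evy' newy'].
  by apply/negP => eyy'; apply: not_bvw; exists y, y'.
Qed.

Lemma biclique_eq_edge_span (v w : T) (B : {set T}) :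
  e v w -> induces_complete_bipartite e (edge_span v w) ->
  biclique e B -> v \in B -> w \in B -> B = edge_span v w.
Proof.
move=> evw cb_span [cbB maxB] vB wB.
by apply/esym/maxB => //; apply: complete_bipartite_sub_edge_span.
Qed.

End EdgeNeighbourhood.

Theorem claim1 (T : finType) (e : rel T) (v w : T) (B1 B2 : {set T}) :
  simple_graph e -> e v w ->
  biclique e B1 -> biclique e B2 -> B1 != B2 ->
  v \in B1 -> w \in B1 -> v \in B2 -> w \in B2 ->
  (alt_a e v w \/ alt_b e v w) \/ (alt_a e w v \/ alt_b e w v).
Proof.
move=> G evw bB1 bB2 neqB vB1 wB1 vB2 wB2.
have [a_vw | not_a] := classic (alt_a e v w); first by left; left.
have [b_vw | not_bvw] := classic (alt_b e v w); first by left; right.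
have [b_wv | not_bwv] := classic (alt_b e w v); first by right; right.
have cb_span := edge_span_complete_bipartite G evw not_a not_bvw not_bwv.
move: neqB.
rewrite (biclique_eq_edge_span G evw cb_span bB1 vB1 wB1).
by rewrite (biclique_eq_edge_span G evw cb_span bB2 vB2 wB2) eqxx.
Qed.
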